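(* Let $\varepsilon\in(0,1)$ and let $G_0$ be the symmetric game with payoff matrix $$U_0= \begin{pmatrix} 0 & -1 & \varepsilon & 0 \\ \varepsilon & 0 & -1 & 0 \\ -1 & \varepsilon & 0 & 0 \\ \frac{-1+\varepsilon}{3} & \frac{-1+\varepsilon}{3} & \frac{-1+\varepsilon}{3} & 0 \end{pmatrix}.$$ Let $n=(1/3,1/3,1/3,0)$, $E_0=\{\lambda n+(1-\lambda)e_4:\lambda\in[0,1]\}$, and $$V_0(x)=\frac12\sum_{i=1}^4\big[\max(0,(U_0x)_i-x\cdot U_0x)\big]^2 .$$ Then there exists an open neighborhood $N_{eq}$ of $E_0$ in $S_4$ such that, for every solution $x(\cdot)$ of the Brown-von Neumann-Nash dynamics in $G_0$, the function $v_0(t)=V_0(x(t))$ satisfies $\dot v_0(t)>0$ whenever $x(t)\in N_{eq}\setminus E_0$.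
   Context: The Brown-von Neumann-Nash (BNN) dynamics for payoff matrix $U$ on $S_4$ is $\dot x_i=k_i(x)-x_i\sum_j k_j(x)$ with $k_i(x)=\max(0,(Ux)_i-x\cdot Ux)$. $e_4$ is the fourth vertex of $S_4$. *)

From HB Require Import structures.
From mathcomp Require Import all_boot all_order all_algebra.
From mathcomp Require Import all_classical all_reals all_analysis.
Set Implicit Arguments. Unset Strict Implicit. Unset Printing Implicit Defensive.
Import Order.TTheory GRing.Theory Num.Theory.
Import numFieldNormedType.Exports.
Local Open Scope classical_set_scope.
Local Open Scope ring_scope.

Section BNN.
Variable R : realType.

Definition payoff (U : 'M[R]_4) (x : 'rV[R]_4) (i : 'I_4) : R :=
  \sum_(j < 4) U i j * x 0 j.

Definition avg_payoff (U : 'M[R]_4) (x : 'rV[R]_4) : R :=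
  \sum_(i < 4) x 0 i * payoff U x i.

Definition excess (U : 'M[R]_4) (x : 'rV[R]_4) (i : 'I_4) : R :=
  Num.max 0 (payoff U x i - avg_payoff U x).

Definition bnn (U : 'M[R]_4) (x : 'rV[R]_4) : 'rV[R]_4 :=
  \row_i (excess U x i - x 0 i * \sum_(j < 4) excess U x j).

Definition simplex4 : set 'rV[R]_4 :=
  [set x | (forall i, 0 <= x 0 i) /\ \sum_(i < 4) x 0 i = 1].

Definition e4 : 'rV[R]_4 := \row_(i < 4) (if i == ord_max then 1 else 0).

Definition nvec : 'rV[R]_4 := \row_(i < 4) (if i == ord_max then 0 else 3^-1).

Definition E0 : set 'rV[R]_4 :=
  [set lam *: nvec + (1 - lam) *: e4 | lam in `[0, 1]%classic].

(* the payoff matrix U_0 (rows/cols indexed 0..3 for 1..4) *)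
Definition U0 (eps : R) : 'M[R]_4 :=
  \matrix_(i < 4, j < 4)
    match nat_of_ord i, nat_of_ord j with
    | 0, 0 => 0 | 0, 1 => -1 | 0, 2 => eps | 0, _ => 0
    | 1, 0 => eps | 1, 1 => 0 | 1, 2 => -1 | 1, _ => 0
    | 2, 0 => -1 | 2, 1 => eps | 2, 2 => 0 | 2, _ => 0
    | _, 3 => 0
    | _, _ => (-1 + eps) / 3
    end.

Definition V0 (eps : R) (x : 'rV[R]_4) : R :=
  2^-1 * \sum_(i < 4) (excess (U0 eps) x i) ^+ 2.

End BNN.

From HB Require Import structures.
From mathcomp Require Import all_boot all_order all_algebra.
From mathcomp Require Import all_classical all_reals all_analysis.
From mathcomp Require Import ring lra.
Import Order.TTheory GRing.Theory Num.Theory.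
Import numFieldNormedType.Exports.
Local Open Scope classical_set_scope.
Local Open Scope ring_scope.

(* Write k for the excess vector, K = k_1 + ... + k_4 and S = k_1^2 + ... + k_4^2.  For any
   game, along BNN on the simplex, V' = xdot . U xdot - K S.  For U_0 the payoff gap of
   strategy 4 is -(1-eps)/2 |y|^2, where y is the deviation of (x_1, x_2, x_3) from its
   mean; hence k_4 = 0 and xdot . U_0 xdot = (1-eps)/2 |P xdot|^2, with P the projection
   orthogonal to (1,1,1) and (P xdot)_i = k_i - K/3 - K y_i.  Since one of k_1, k_2, k_3
   vanishes, K^2 <= 2 S, and this gives V' >= (1-eps) (1/12 - |y|^2) S - K S.  Near E_0
   both y and K are small multiples of 1 - eps, so V' > 0 whenever S > 0; and S = 0
   would make the three cyclic gaps, of size |y|, bounded by O(|y|^2), forcing y = 0,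
   i.e. x in E_0. *)

Lemma max0_mulr_id (R : realDomainType) (g : R) :
  Num.max 0 g * g = Num.max 0 g ^+ 2.
Proof. by have [g_le0|g_gt0] := leP g 0; rewrite ?(max_l g_le0) ?mul0r ?expr0n // expr2. Qed.

Section Derivatives.
Context {R : realType}.

Lemma is_derive_sqr_max0 (u : R) :
  is_derive u 1 (fun z : R => Num.max 0 z ^+ 2) (2 * Num.max 0 u).
Proof.
have [u_lt0|u_gt0|->] := ltgtP u 0.
- rewrite mulr0; apply: near_eq_is_derive (is_derive_cst 0 u 1).
  by near do rewrite /= max_l ?expr0n ?ltW //; exact: lt_nbhsl.
- apply: near_eq_is_derive (is_derive_eq (is_deriveX 2 (is_derive_id u 1)) _).
    by near do rewrite /= max_r ?ltW //; exact: lt_nbhsr.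
  by rewrite /= expr1 [_%:A]mulr1.
- (* at 0 the difference quotient max(0, z)^2 / z is max(0, z) *)
  rewrite mulr0; apply/is_derive1_caratheodory.
  exists (fun z => Num.max 0 z); split; last by rewrite maxxx.
  + by move=> z; rewrite maxxx expr0n /= subr0 subr0 max0_mulr_id.
  + exact: (@continuous_max R R (cst 0) id 0 (cvg_cst _) cvg_id).
Unshelve. all: by end_near.
Qed.

Lemma is_derive_coord {m n} {x : R -> 'M[R]_(m, n)} {t : R} {xd : 'M[R]_(m, n)} i j :
  is_derive t 1 x xd -> is_derive t 1 (fun s => x s i j) (xd i j).
Proof.
move=> [dx <-].
have q := cvg_comp _ _ dx (@coord_continuous R m n i j ('D_1 x t)).
suff q' : (fun h => h^-1 *: (((fun s => x s i j) \o shift t) h%:A - x t i j)) @ 0^'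
          --> 'D_1 x t i j.
  by split; [exact: cvgP q' | exact: cvg_lim q'].
by apply: cvg_trans q; apply: near_eq_cvg; near=> h; rewrite /= !mxE.
Unshelve. all: by end_near.
Qed.

Lemma is_derive_sum_fun {n} {h : 'I_n -> R -> R} {t : R} {dh : 'I_n -> R} :
  (forall i, is_derive t 1 (h i) (dh i)) ->
  is_derive t 1 (fun s => \sum_(i < n) h i s) (\sum_(i < n) dh i).
Proof. by move=> /is_derive_sum; rewrite fct_sumE. Qed.

End Derivatives.

Section BNN.
Context {R : realType} (U : 'M[R]_4).

Definition avg_payoff_rate (x xd : 'rV[R]_4) : R :=
  \sum_(i < 4) (x 0 i * payoff U xd i + payoff U x i * xd 0 i).

Definition lyap (x : 'rV[R]_4) : R := 2^-1 * \sum_(i < 4) excess U x i ^+ 2.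

Definition lyap_rate (x xd : 'rV[R]_4) : R :=
  \sum_(i < 4) excess U x i * (payoff U xd i - avg_payoff_rate x xd).

Section Trajectory.
Variables (x : R -> 'rV[R]_4) (t : R) (xd : 'rV[R]_4).
Hypothesis dx : is_derive t 1 x xd.

Lemma is_derive_payoff i :
  is_derive t 1 (fun s => payoff U (x s) i) (payoff U xd i).
Proof.
apply: is_derive_sum_fun => j.
by have := is_deriveZ (U i j) (is_derive_coord 0 j dx).
Qed.

Lemma is_derive_avg_payoff :
  is_derive t 1 (fun s => avg_payoff U (x s)) (avg_payoff_rate (x t) xd).
Proof.
apply: is_derive_sum_fun => i.
by have := is_deriveM (is_derive_coord 0 i dx) (is_derive_payoff i).
Qed.

Lemma is_derive_lyap : is_derive t 1 (lyap \o x) (lyap_rate (x t) xd).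
Proof.
have dk i := is_derive1_comp (is_derive_sqr_max0 _)
  (is_deriveB (is_derive_payoff i) is_derive_avg_payoff).
rewrite (_ : lyap_rate _ _ = 2^-1 *: \sum_i (2 * excess U (x t) i *
                              (payoff U xd i - avg_payoff_rate (x t) xd))).
  by have := is_deriveZ 2^-1 (is_derive_sum_fun dk).
rewrite /lyap_rate [RHS]mulr_sumr; apply: eq_bigr => i _.
by rewrite mulrA mulrA mulVf ?pnatr_eq0 // mul1r.
Qed.

End Trajectory.

Lemma bnn_sum {x : 'rV[R]_4} : \sum_(i < 4) x 0 i = 1 -> \sum_(i < 4) bnn U x 0 i = 0.
Proof.
move=> x_sum; under eq_bigr do rewrite mxE.
by rewrite sumrB -mulr_suml x_sum mul1r subrr.
Qed.

Lemma lyap_rate_bnn (x : 'rV[R]_4) : \sum_(i < 4) x 0 i = 1 ->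
  lyap_rate x (bnn U x) =
  avg_payoff U (bnn U x) - (\sum_(i < 4) excess U x i) * \sum_(i < 4) excess U x i ^+ 2.
Proof.
move=> x_sum.
set k := excess U x; set K := \sum_i k i; set S := \sum_i k i ^+ 2.
set xd := bnn U x; set a := avg_payoff U x.
have xdE i : xd 0 i = k i - x 0 i * K by rewrite mxE.
have xd_sum : \sum_i xd 0 i = 0 := bnn_sum x_sum.
have x_gap : \sum_i x 0 i * (payoff U x i - a) = 0.
  under eq_bigr do rewrite mulrBr.
  by rewrite sumrB -mulr_suml x_sum mul1r subrr.
have k_gap : \sum_i k i * (payoff U x i - a) = S.
  by apply: eq_bigr => i _; exact: max0_mulr_id.
have xd_payoff : \sum_i payoff U x i * xd 0 i = S.
  have -> : \sum_i payoff U x i * xd 0 i =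
            \sum_i k i * (payoff U x i - a) - K * \sum_i x 0 i * (payoff U x i - a)
            + a * \sum_i xd 0 i.
    by rewrite !mulr_sumr -sumrB -big_split; apply: eq_bigr => i _ /=; rewrite xdE; ring.
  by rewrite k_gap x_gap xd_sum !mulr0 subr0 addr0.
have k_payoff : \sum_i k i * payoff U xd i =
                avg_payoff U xd + K * \sum_i x 0 i * payoff U xd i.
  rewrite /avg_payoff mulr_sumr -big_split; apply: eq_bigr => i _ /=.
  by rewrite xdE; ring.
rewrite /lyap_rate /avg_payoff_rate.
under eq_bigr do rewrite mulrBr.
by rewrite sumrB -mulr_suml -/K k_payoff big_split xd_payoff /=; ring.
Qed.

End BNN.

Section ReducedRate.
Context {R : realFieldType}.

Definition reduced_rate (e y0 y1 y2 k0 k1 k2 : R) : R :=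
  let K := k0 + k1 + k2 in
  (1 - e) / 2 * ((k0 - K / 3 - K * y0) ^+ 2 + (k1 - K / 3 - K * y1) ^+ 2
                 + (k2 - K / 3 - K * y2) ^+ 2)
  - K * (k0 ^+ 2 + k1 ^+ 2 + k2 ^+ 2).

Lemma sqr_sum3_ge (u0 u1 u2 : R) : 0 <= u0 -> 0 <= u1 -> 0 <= u2 ->
  u0 ^+ 2 + u1 ^+ 2 + u2 ^+ 2 <= (u0 + u1 + u2) ^+ 2.
Proof. by move=> u0_ge0 u1_ge0 u2_ge0; nra. Qed.

Lemma sqrB_ge (u v : R) : u ^+ 2 / 2 - v ^+ 2 <= (u - v) ^+ 2.
Proof. by have := sqr_ge0 (u - 2 * v); nra. Qed.

Lemma sqr_le_of_norm_lt {y c : R} : `|y| < c -> y ^+ 2 <= c ^+ 2.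
Proof.
rewrite ltr_norml => /andP[? ?].
have : 0 <= (c - y) * (c + y) by apply: mulr_ge0; lra.
by nra.
Qed.

Lemma sum_sqr_le_of_sum0 {l0 l1 l2 d : R} : l0 + l1 + l2 = 0 ->
  l0 <= d -> l1 <= d -> l2 <= d -> l0 ^+ 2 + l1 ^+ 2 + l2 ^+ 2 <= 6 * d ^+ 2.
Proof.
move=> l_sum l0_le l1_le l2_le.
have := @sqr_sum3_ge (d - l0) (d - l1) (d - l2); rewrite !subr_ge0.
have -> : d - l0 + (d - l1) + (d - l2) = 3 * d by rewrite -[RHS]subr0 -l_sum; ring.
move=> /(_ l0_le l1_le l2_le).
have -> : (d - l0) ^+ 2 + (d - l1) ^+ 2 + (d - l2) ^+ 2
          = 3 * d ^+ 2 - 2 * d * (l0 + l1 + l2) + (l0 ^+ 2 + l1 ^+ 2 + l2 ^+ 2) by ring.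
by rewrite l_sum mulr0 subr0; lra.
Qed.

(* The y_i stand for the deviations of x_1, x_2, x_3 from their mean and the k_i for the
   excesses of strategies 1, 2, 3 in the game U_0 (see excess_U0 below). *)
Context {e y0 y1 y2 k0 k1 k2 : R}.
Hypotheses (e_gt0 : 0 < e) (e_lt1 : e < 1) (y_sum : y0 + y1 + y2 = 0).
Let r : R := (1 - e) / 400.
Hypotheses (y0_small : `|y0| < 2 * r) (y1_small : `|y1| < 2 * r)
  (y2_small : `|y2| < 2 * r).
Let Y : R := y0 ^+ 2 + y1 ^+ 2 + y2 ^+ 2.
Let delta : R := (1 - e) / 2 * Y.
Hypotheses (k0E : k0 = Num.max 0 (- y1 + e * y2 - delta))
  (k1E : k1 = Num.max 0 (e * y0 - y2 - delta))
  (k2E : k2 = Num.max 0 (- y0 + e * y1 - delta)).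

Let r_gt0 : 0 < r. Proof. by rewrite /r divr_gt0 // subr_gt0. Qed.

Let r_le : r <= 1 / 400. Proof. by rewrite /r; have := e_gt0; lra. Qed.

Let Y_small : Y <= 1 / 1000.
Proof.
have : r ^+ 2 <= r / 400 by have := r_gt0; have := r_le; nra.
have := sqr_le_of_norm_lt y0_small; have := sqr_le_of_norm_lt y1_small.
have := sqr_le_of_norm_lt y2_small; rewrite /Y !exprMn; have := r_le; lra.
Qed.

Let Y_ge0 : 0 <= Y.
Proof. by have := sqr_ge0 y0; have := sqr_ge0 y1; have := sqr_ge0 y2; rewrite /Y; lra. Qed.

Let delta_ge0 : 0 <= delta.
Proof. by rewrite /delta mulr_ge0 // divr_ge0 // subr_ge0 ltW. Qed.

Lemma excess_ge0 : [/\ 0 <= k0, 0 <= k1 & 0 <= k2].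
Proof. by rewrite k0E k1E k2E !le_max !lexx. Qed.

Lemma excess_small : [/\ k0 <= 4 * r, k1 <= 4 * r & k2 <= 4 * r].
Proof.
move: y0_small y1_small y2_small; rewrite !ltr_norml.
move=> /andP[? ?] /andP[? ?] /andP[? ?].
have := e_gt0; have := e_lt1; have := r_gt0; have := delta_ge0.
rewrite k0E k1E k2E !ge_max => *; split; apply/andP; split; nra.
Qed.

Let cyclic_sum : (- y1 + e * y2) + (e * y0 - y2) + (- y0 + e * y1) = 0.
Proof. by rewrite -[RHS](mulr0 (e - 1)) -y_sum; ring. Qed.

Let cyclic_sum_sqr :
  (- y1 + e * y2) ^+ 2 + (e * y0 - y2) ^+ 2 + (- y0 + e * y1) ^+ 2 = (1 + e + e ^+ 2) * Y.
Proof.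
have y2E : y2 = - y0 - y1 by have := y_sum; lra.
by rewrite /Y y2E; ring.
Qed.

Lemma excess_eq0 : [\/ k0 = 0, k1 = 0 | k2 = 0].
Proof.
have := delta_ge0; have := cyclic_sum => *.
have [l0|l0] := leP (- y1 + e * y2) 0; first by constructor 1; rewrite k0E max_l //; lra.
have [l1|l1] := leP (e * y0 - y2) 0; first by constructor 2; rewrite k1E max_l //; lra.
by constructor 3; rewrite k2E max_l //; lra.
Qed.

Lemma excess_sqr_sum_gt0 : 0 < Y -> 0 < k0 ^+ 2 + k1 ^+ 2 + k2 ^+ 2.
Proof.
move=> Y_gt0; rewrite ltNge; apply/negP => S_le0.
have := sqr_ge0 k0; have := sqr_ge0 k1; have := sqr_ge0 k2 => *.
have k0_0 : k0 = 0 by apply/eqP; rewrite -sqrf_eq0 eq_le sqr_ge0 andbT; lra.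
have k1_0 : k1 = 0 by apply/eqP; rewrite -sqrf_eq0 eq_le sqr_ge0 andbT; lra.
have k2_0 : k2 = 0 by apply/eqP; rewrite -sqrf_eq0 eq_le sqr_ge0 andbT; lra.
have l0_le : - y1 + e * y2 <= delta by rewrite -subr_le0 -k0_0 k0E le_max lexx orbT.
have l1_le : e * y0 - y2 <= delta by rewrite -subr_le0 -k1_0 k1E le_max lexx orbT.
have l2_le : - y0 + e * y1 <= delta by rewrite -subr_le0 -k2_0 k2E le_max lexx orbT.
have := sum_sqr_le_of_sum0 cyclic_sum l0_le l1_le l2_le.
rewrite cyclic_sum_sqr => ineq.
have Y_le : Y <= 3 / 2 * Y ^+ 2.
  have delta_sqr : 6 * delta ^+ 2 = 3 / 2 * (1 - e) ^+ 2 * Y ^+ 2.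
    by rewrite /delta; field.
  rewrite delta_sqr in ineq.
  have := e_gt0; have := e_lt1; have := sqr_ge0 Y => *; nra.
have : 1 <= 3 / 2 * Y by rewrite -(ler_pM2l Y_gt0) mulr1 mulrCA -expr2.
by have := Y_small; lra.
Qed.

Lemma reduced_rate_gt0 : 0 < Y -> 0 < reduced_rate e y0 y1 y2 k0 k1 k2.
Proof.
move=> Y_gt0; have S_gt0 := excess_sqr_sum_gt0 Y_gt0.
have [k0_ge0 k1_ge0 k2_ge0] := excess_ge0.
have [k0_le k1_le k2_le] := excess_small.
rewrite /reduced_rate; set K := k0 + k1 + k2; set S := k0 ^+ 2 + k1 ^+ 2 + k2 ^+ 2.
have K_sqr : K ^+ 2 <= 2 * S.
  rewrite /K /S; case: excess_eq0 => ->.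
  - by have := sqr_ge0 (k1 - k2); nra.
  - by have := sqr_ge0 (k0 - k2); nra.
  - by have := sqr_ge0 (k0 - k1); nra.
have Q_ge : S * (1 / 6 - 2 * Y) <=
    (k0 - K / 3 - K * y0) ^+ 2 + (k1 - K / 3 - K * y1) ^+ 2 + (k2 - K / 3 - K * y2) ^+ 2.
  have := sqrB_ge (k0 - K / 3) (K * y0); have := sqrB_ge (k1 - K / 3) (K * y1).
  have := sqrB_ge (k2 - K / 3) (K * y2).
  have : (k0 - K / 3) ^+ 2 + (k1 - K / 3) ^+ 2 + (k2 - K / 3) ^+ 2 = S - K ^+ 2 / 3.
    by rewrite /S /K; field.
  have : (K * y0) ^+ 2 + (K * y1) ^+ 2 + (K * y2) ^+ 2 = K ^+ 2 * Y by rewrite /Y; ring.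
  have : K ^+ 2 * Y <= 2 * S * Y by rewrite ler_wpM2r.
  lra.
have c_ge0 : 0 <= (1 - e) / 2 by rewrite divr_ge0 // subr_ge0 ltW.
have K_lt : K < (1 - e) / 2 * (1 / 6 - 2 * Y).
  have : (1 - e) / 2 * (1 / 6 - 1 / 500) <= (1 - e) / 2 * (1 / 6 - 2 * Y).
    by apply: ler_wpM2l; [exact: c_ge0 | have := Y_small; lra].
  by rewrite /K /r in k0_le k1_le k2_le *; have := e_lt1; lra.
have := ler_wpM2l c_ge0 Q_ge.
have : K * S < (1 - e) / 2 * (1 / 6 - 2 * Y) * S by rewrite ltr_pM2r.
lra.
Qed.

End ReducedRate.

Local Notation i0 := (@Ordinal 4 0 isT).
Local Notation i1 := (@Ordinal 4 1 isT).
Local Notation i2 := (@Ordinal 4 2 isT).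
Local Notation i3 := (@Ordinal 4 3 isT).

Lemma sum_ord4 (V : nmodType) (f : 'I_4 -> V) :
  \sum_(i < 4) f i = f i0 + f i1 + f i2 + f i3.
Proof.
rewrite !big_ord_recr big_ord0 /= add0r.
by congr (_ + _ + _ + _); congr f; apply: val_inj.
Qed.

Lemma ord4P (j : 'I_4) : [\/ j = i0, j = i1, j = i2 | j = i3].
Proof.
case: j => -[|[|[|[|//]]]] j_lt4.
- by constructor 1; apply: val_inj.
- by constructor 2; apply: val_inj.
- by constructor 3; apply: val_inj.
- by constructor 4; apply: val_inj.
Qed.

Section GameU0.
Context {R : realType} (e : R).

Definition dev3 (x : 'rV[R]_4) (i : 'I_4) : R := x 0 i - (x 0 i0 + x 0 i1 + x 0 i2) / 3.

Lemma payoff_U0 (v : 'rV[R]_4) :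
  [/\ payoff (U0 e) v i0 = - v 0 i1 + e * v 0 i2,
      payoff (U0 e) v i1 = e * v 0 i0 - v 0 i2,
      payoff (U0 e) v i2 = - v 0 i0 + e * v 0 i1 &
      payoff (U0 e) v i3 = (-1 + e) / 3 * (v 0 i0 + v 0 i1 + v 0 i2)].
Proof. by split; rewrite /payoff sum_ord4 !mxE /=; ring. Qed.

Lemma excess_U0 {x : 'rV[R]_4} : \sum_(i < 4) x 0 i = 1 ->
  let y0 := dev3 x i0 in let y1 := dev3 x i1 in let y2 := dev3 x i2 in
  let delta := (1 - e) / 2 * (y0 ^+ 2 + y1 ^+ 2 + y2 ^+ 2) in
  [/\ excess (U0 e) x i0 = Num.max 0 (- y1 + e * y2 - delta),
      excess (U0 e) x i1 = Num.max 0 (e * y0 - y2 - delta),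
      excess (U0 e) x i2 = Num.max 0 (- y0 + e * y1 - delta) &
      excess (U0 e) x i3 = Num.max 0 (- delta)].
Proof.
rewrite sum_ord4 => x_sum /=.
have x3E : x 0 i3 = 1 - x 0 i0 - x 0 i1 - x 0 i2 by lra.
have [p0 p1 p2 p3] := payoff_U0 x.
rewrite /excess /avg_payoff sum_ord4 p0 p1 p2 p3 x3E /dev3.
by split; congr (Num.max 0 _); field.
Qed.

Lemma avg_payoff_U0 (v : 'rV[R]_4) : \sum_(i < 4) v 0 i = 0 ->
  let s := v 0 i0 + v 0 i1 + v 0 i2 in
  avg_payoff (U0 e) v =
  (1 - e) / 2 * ((v 0 i0 - s / 3) ^+ 2 + (v 0 i1 - s / 3) ^+ 2 + (v 0 i2 - s / 3) ^+ 2).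
Proof.
rewrite sum_ord4 => v_sum /=.
have v3E : v 0 i3 = - (v 0 i0 + v 0 i1 + v 0 i2) by lra.
have [p0 p1 p2 p3] := payoff_U0 v.
by rewrite /avg_payoff sum_ord4 p0 p1 p2 p3 v3E; field.
Qed.

Lemma dev3_sum (x : 'rV[R]_4) : dev3 x i0 + dev3 x i1 + dev3 x i2 = 0.
Proof. by rewrite /dev3; field. Qed.

Lemma lyap_rate_bnn_U0 (x : 'rV[R]_4) : e <= 1 -> \sum_(i < 4) x 0 i = 1 ->
  lyap_rate (U0 e) x (bnn (U0 e) x) =
  reduced_rate e (dev3 x i0) (dev3 x i1) (dev3 x i2)
    (excess (U0 e) x i0) (excess (U0 e) x i1) (excess (U0 e) x i2).
Proof.
move=> e_le1 x_sum.
have [_ _ _ k3E] := excess_U0 x_sum.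
have k3_0 : excess (U0 e) x i3 = 0.
  by rewrite k3E max_l // oppr_le0 mulr_ge0 ?divr_ge0 ?subr_ge0 ?addr_ge0 ?sqr_ge0.
rewrite lyap_rate_bnn // avg_payoff_U0 ?bnn_sum //=.
rewrite !mxE !sum_ord4 k3_0 addr0.
by rewrite /reduced_rate /dev3; field.
Qed.

End GameU0.

Section Neighbourhood.
Context {R : realType}.

Lemma E0_entries {z : 'rV[R]_4} : E0 z ->
  exists2 lam, 0 <= lam <= 1 &
    [/\ z 0 i0 = lam / 3, z 0 i1 = lam / 3, z 0 i2 = lam / 3 & z 0 i3 = 1 - lam].
Proof.
case=> lam; rewrite /= in_itv /= => lam01 <-; exists lam => //.
by split; rewrite !mxE /=; ring.
Qed.

Lemma E0_simplex : @E0 R `<=` @simplex4 R.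
Proof.
move=> _ [lam + <-]; rewrite /= in_itv /= => /andP[lam_ge0 lam_le1]; split.
  move=> i; rewrite !mxE; case: (i == ord_max); rewrite ?mulr0 ?mulr1 ?addr0 ?add0r.
    by rewrite subr_ge0.
  by rewrite mulr_ge0 ?invr_ge0.
by rewrite sum_ord4 !mxE /=; field.
Qed.

Lemma E0_dev3 {z : 'rV[R]_4} : E0 z -> [/\ dev3 z i0 = 0, dev3 z i1 = 0 & dev3 z i2 = 0].
Proof. by move=> /E0_entries[lam _ [z0 z1 z2 _]]; rewrite /dev3 z0 z1 z2; split; field. Qed.

Lemma simplex_dev3_E0 (x : 'rV[R]_4) : @simplex4 R x ->
  dev3 x i0 = 0 -> dev3 x i1 = 0 -> dev3 x i2 = 0 -> E0 x.
Proof.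
move=> [x_ge0 x_sum] y0 y1 y2; rewrite sum_ord4 in x_sum.
exists (x 0 i0 + x 0 i1 + x 0 i2).
  rewrite /= in_itv /=; have := x_ge0 i0; have := x_ge0 i1; have := x_ge0 i2.
  by have := x_ge0 i3 => *; apply/andP; split; lra.
move: y0 y1 y2; rewrite /dev3 => y0 y1 y2.
by apply/rowP => j; rewrite !mxE; case: (ord4P j) => -> /=; lra.
Qed.

Lemma dev3_sqr_gt0 {x : 'rV[R]_4} : @simplex4 R x -> ~ E0 x ->
  0 < dev3 x i0 ^+ 2 + dev3 x i1 ^+ 2 + dev3 x i2 ^+ 2.
Proof.
move=> xS xNE0; rewrite lt0r addr_ge0 ?addr_ge0 ?sqr_ge0 // andbT; apply/eqP => /eqP.
rewrite !paddr_eq0 ?addr_ge0 ?sqr_ge0 // !sqrf_eq0.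
by move=> /andP[/andP[/eqP y0 /eqP y1] /eqP y2]; exact/xNE0/simplex_dev3_E0.
Qed.

Lemma E0_ball_dev3 {z x : 'rV[R]_4} {c : R} : E0 z -> ball z c x ->
  [/\ `|dev3 x i0| < 2 * c, `|dev3 x i1| < 2 * c & `|dev3 x i2| < 2 * c].
Proof.
move=> Ez [_ zx]; have [z0 z1 z2] := E0_dev3 Ez.
have xz j : `|x 0 j - z 0 j| < c by have := zx 0 j; rewrite /ball /= distrC.
have dev3_near i : `|dev3 x i - dev3 z i| < 2 * c.
  move: (xz i) (xz i0) (xz i1) (xz i2); rewrite !ltr_norml /dev3.
  by move=> /andP[? ?] /andP[? ?] /andP[? ?] /andP[? ?]; lra.
by rewrite -[dev3 x i0]subr0 -[dev3 x i1]subr0 -[dev3 x i2]subr0 -{1}z0 -{1}z1 -{1}z2.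
Qed.

End Neighbourhood.

Theorem lemma3 (R : realType) (eps : R) (heps : 0 < eps < 1) :
  exists Neq : set 'rV[R]_4,
    (exists O : set 'rV[R]_4, open O /\ Neq = O `&` @simplex4 R) /\
    @E0 R `<=` Neq /\
    forall (I : set R) (x : R -> 'rV[R]_4),
      open I ->
      (forall t, I t -> @simplex4 R (x t) /\ is_derive t 1 x (bnn (U0 eps) (x t))) ->
      forall t, I t -> Neq (x t) -> ~ @E0 R (x t) ->
        exists d : R, is_derive t 1 (V0 eps \o x) d /\ 0 < d.
Proof.
case/andP: heps => eps_gt0 eps_lt1; pose r := (1 - eps) / 400.
pose O := \bigcup_(z in @E0 R) ball z r.
exists (O `&` @simplex4 R); split.
  by exists O; split => //; apply: bigcup_open => z _; exact: ball_open.
split=> [z Ez|I x _ hx t It [[z Ez xz] xS] xNE0].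
  by split; [exists z => //; apply: ballxx; rewrite divr_gt0 // subr_gt0 | exact: E0_simplex].
have [[_ x_sum] dx] := hx t It.
exists (lyap_rate (U0 eps) (x t) (bnn (U0 eps) (x t))); split; first exact: is_derive_lyap.
rewrite lyap_rate_bnn_U0 ?ltW //.
have [y0_small y1_small y2_small] := E0_ball_dev3 Ez xz.
have [k0E k1E k2E _] := excess_U0 eps x_sum.
apply: (reduced_rate_gt0 eps_gt0 eps_lt1 (dev3_sum _) y0_small y1_small y2_small k0E k1E k2E).
exact: dev3_sqr_gt0.
Qed.
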